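(* Every geometric centrality has ties on every graph that is not geometrically rigid. Moreover, there exists a geometric centrality $f$ such that for every geometrically rigid graph $G$, $f$ has no ties on $G$.
   Context: A graph $G$ is a finite directed graph with node set $V_G=\{0,\dots,n-1\}$ and arc set $E_G\subseteq V_G\times V_G$. A path of length $k$ from $x$ to $y$ is a sequence $x=x_0,\dots,x_k=y$ with $(x_i,x_{i+1})\in E_G$; $d_G(x,y)$ is the length of a shortest such path, or $\infty$ if none exists. An isomorphism $\varphi:G\to H$ is a bijection with $x\to_G y$ iff $\varphi(x)\to_H\varphi(y)$. A centrality $f$ assigns to each graph $G$ a map $f_G:V_G\to\mathbb{R}$ with $f_G(x)=f_H(\varphi(x))$ for every isomorphism $\varphi:G\to H$. $f$ has no ties on $G$ if $f_G(x)\ne f_G(y)$ for all distinct $x,y$. For a node $i$, the distance-count function is $c_{G,i}:\mathbb{N}\to\mathbb{N}$, $c_{G,i}(k)=|\{j\in V_G: d_G(j,i)=k\}|$. The distance-count matrix $C_G\in\mathbb{R}^{n\times n}$ has entries $(C_G)_{i,k}=c_{G,i}(k)$ for $i,k\in\{0,\dots,n-1\}$. $G$ is geometrically rigid if the rows of $C_G$ are pairwise distinct. A centrality $f$ respects a permutation $\pi$ of $V_G$ on $G$ if $f_G(\pi(i))\ge f_G(\pi(i+1))$ for all $i<n-1$; two centralities are equivalent if on every graph they respect exactly the same permutations. A centrality $f$ is strictly geometric if for all graphs $G,G'$ and nodes $i\in V_G$, $i'\in V_{G'}$, $c_{G,i}=c_{G',i'}$ implies $f_G(i)=f_{G'}(i')$;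 it is geometric if it is equivalent to a strictly geometric centrality. *)

From Stdlib Require Import Reals.
From mathcomp Require Import all_boot all_fingroup.
Set Implicit Arguments. Unset Strict Implicit. Unset Printing Implicit Defensive.

Definition graph (n : nat) := {set 'I_n * 'I_n}.

Definition arc n (G : graph n) : rel 'I_n := fun x y => (x, y) \in G.

Definition walkb n (G : graph n) (x y : 'I_n) (k : nat) : bool :=
  [exists p : k.-tuple 'I_n, path (arc G) x p && (last x p == y)].

Definition distb n (G : graph n) (x y : 'I_n) (k : nat) : bool :=
  walkb G x y k && [forall m : 'I_k, ~~ walkb G x y m].

Definition dcount n (G : graph n) (i : 'I_n) (k : nat) : nat :=
  #|[set j | distb G j i k]|.

Definition dcmx n (G : graph n) (i k : 'I_n) : nat := dcount G i k.

Definition geom_rigid n (G : graph n) : Prop :=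
  forall i j : 'I_n, i <> j -> exists k : 'I_n, dcmx G i k <> dcmx G j k.

Definition centrality_fun := forall n, graph n -> 'I_n -> R.

Definition graph_iso n (G H : graph n) (phi : 'I_n -> 'I_n) : Prop :=
  bijective phi /\ forall x y, (x, y) \in G <-> (phi x, phi y) \in H.

Definition is_centrality (f : centrality_fun) : Prop :=
  forall n (G H : graph n) (phi : 'I_n -> 'I_n),
    graph_iso G H phi -> forall x, f n G x = f n H (phi x).

Definition no_ties (f : centrality_fun) n (G : graph n) : Prop :=
  forall x y : 'I_n, x <> y -> f n G x <> f n G y.

Definition respects (f : centrality_fun) n (G : graph n) (pi : {perm 'I_n}) : Prop :=
  forall i j : 'I_n, nat_of_ord j = (nat_of_ord i).+1 ->
    Rle (f n G (pi j)) (f n G (pi i)).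

Definition equivalent (f g : centrality_fun) : Prop :=
  forall n (G : graph n) (pi : {perm 'I_n}), respects f G pi <-> respects g G pi.

Definition strictly_geometric (f : centrality_fun) : Prop :=
  forall n n' (G : graph n) (G' : graph n') (i : 'I_n) (i' : 'I_n'),
    (forall k, dcount G i k = dcount G' i' k) -> f n G i = f n' G' i'.

Definition geometric (f : centrality_fun) : Prop :=
  exists g, is_centrality g /\ strictly_geometric g /\ equivalent f g.

From Stdlib Require Import Reals.
From mathcomp Require Import all_boot all_order all_fingroup.
From mathcomp Require Import Rstruct.

(* A geometric centrality [f] orders every graph like some strictly geometric
   [g], and [g] cannot separate two nodes with the same distance-count row.
   If [f] had no ties on [G], the only permutation respecting [f] would be the
   one listing the nodes by decreasing value (two sorted permutations of the
   same values coincide). Composing it with the transposition of two twin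
   nodes yields another permutation respecting [g], hence respecting [f]: a
   contradiction. Conversely, the distance-count function of a node has finite
   support, so it can be coded injectively by a natural number; this code is a
   strictly geometric centrality which separates nodes with distinct rows. *)

Set Implicit Arguments. Unset Strict Implicit. Unset Printing Implicit Defensive.

Import Order.TTheory.

Section RespectingPermutations.

Local Open Scope order_scope.

Variables (d : Order.disp_t) (T : orderType d) (n : nat) (v : 'I_n -> T).

Definition respecting (pi : {perm 'I_n}) : Prop :=
  forall i j : 'I_n, j = i.+1 :> nat -> v (pi j) <= v (pi i).

Definition perm_values (pi : {perm 'I_n}) : seq T := [seq v (pi i) | i <- enum 'I_n].

Lemma nth_perm_values pi x0 (i : 'I_n) : nth x0 (perm_values pi) i = v (pi i).
Proof. by rewrite (nth_map i) ?size_enum_ord // nth_ord_enum. Qed.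

Lemma respecting_sorted pi : respecting pi <-> sorted >=%O (perm_values pi).
Proof.
split=> [pi_resp | sorted_vals i j ji].
- case def_vals: (perm_values pi) => [//|x0 s]; apply/(sortedP x0) => i.
  rewrite -def_vals size_map size_enum_ord => lt_Si_n.
  have := pi_resp (Ordinal (ltnW lt_Si_n)) (Ordinal lt_Si_n) erefl.
  by rewrite -!(nth_perm_values pi x0).
- have lt_Si_n : (i.+1 < size (perm_values pi))%N by rewrite size_map size_enum_ord -ji.
  move/(sortedP (v (pi i))): sorted_vals => /(_ i lt_Si_n).
  by rewrite -ji !nth_perm_values.
Qed.

Lemma perm_eq_perm_values pi pi' : perm_eq (perm_values pi) (perm_values pi').
Proof.
have perm_enum (s : {perm 'I_n}) : perm_eq [seq s i | i <- enum 'I_n] (enum 'I_n).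
  apply: uniq_perm; rewrite ?(map_inj_uniq (@perm_inj _ s)) ?enum_uniq // => i.
  by rewrite mem_enum; apply/mapP; exists (s^-1 i)%g; rewrite ?mem_enum ?permKV.
have map_perm_values (s : {perm 'I_n}) :
    perm_values s = map v [seq s i | i <- enum 'I_n] by rewrite -map_comp.
rewrite !map_perm_values; apply: perm_map.
by rewrite (permPl (perm_enum pi)) perm_sym perm_enum.
Qed.

Lemma respecting_perm_values pi pi' :
  respecting pi -> respecting pi' -> perm_values pi = perm_values pi'.
Proof.
move=> /respecting_sorted sorted_pi /respecting_sorted sorted_pi'.
exact: sorted_eq ge_trans ge_anti _ _ sorted_pi sorted_pi' (perm_eq_perm_values pi pi').
Qed.

Lemma respecting_uniq pi pi' :
  injective v -> respecting pi -> respecting pi' -> pi = pi'.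
Proof.
move=> inj_v resp_pi resp_pi'; apply/permP => i; apply: inj_v.
by rewrite -!(nth_perm_values _ (v i)) (respecting_perm_values resp_pi resp_pi').
Qed.

Lemma exists_respecting : exists pi, respecting pi.
Proof.
pose s := sort (relpre v >=%O) (enum 'I_n).
have size_s : size s == n by rewrite size_sort size_enum_ord.
pose t := Tuple size_s.
have inj_t : injective (tnth t).
  by apply/tuple_uniqP; rewrite sort_uniq enum_uniq.
exists (perm inj_t); apply/respecting_sorted.
have -> : perm_values (perm inj_t) = map v t.
  by rewrite -[in RHS]map_tnth_enum -map_comp; apply: eq_map => i /=; rewrite permE.
rewrite sorted_map.
by apply: sort_sorted => x y; apply: ge_total.
Qed.

Lemma respecting_mulr pi (s : {perm 'I_n}) :
  (forall x, v (s x) = v x) -> respecting pi -> respecting (pi * s)%g.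
Proof. by move=> vs resp_pi i j ji; rewrite !permM !vs; apply: resp_pi. Qed.

End RespectingPermutations.

Section Walks.

Variables (n : nat) (G : graph n).

Lemma walkb_short x y k : walkb G x y k -> exists2 m, m < n & walkb G x y m.
Proof.
case/existsP=> p /andP[walk_p].
case: (shortenP walk_p) => p' walk_p' uniq_p' _ last_p'.
exists (size p').
  rewrite -[in X in _ < X](size_enum_ord n) (uniq_leq_size uniq_p') // => z.
  by rewrite mem_enum.
by apply/existsP; exists (in_tuple p'); rewrite walk_p' last_p'.
Qed.

Lemma distb_ge x y k : n <= k -> distb G x y k = false.
Proof.
move=> le_n_k; apply/negbTE/andP => -[/walkb_short[m lt_m_n walk_m] no_shorter].
have lt_m_k : m < k by apply: leq_trans le_n_k.
by move/forallP/(_ (Ordinal lt_m_k)): no_shorter; rewrite walk_m.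
Qed.

Lemma dcount_ge i k : n <= k -> dcount G i k = 0.
Proof.
by move=> le_n_k; apply/eqP; rewrite cards_eq0; apply/eqP/setP => j; rewrite !inE distb_ge.
Qed.

End Walks.

Lemma walkb_hom n (G H : graph n) (h : 'I_n -> 'I_n) :
  (forall x y, (x, y) \in G -> (h x, h y) \in H) ->
  forall x y k, walkb G x y k -> walkb H (h x) (h y) k.
Proof.
move=> hom_h x y k /existsP[p /andP[walk_p /eqP last_p]].
apply/existsP; exists (map_tuple h p).
by rewrite /= path_map last_map last_p eqxx andbT (sub_path _ walk_p).
Qed.

Section Isomorphism.

Variables (n : nat) (G H : graph n) (phi : 'I_n -> 'I_n).
Hypothesis iso_phi : graph_iso G H phi.

Lemma walkb_iso x y k : walkb H (phi x) (phi y) k = walkb G x y k.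
Proof.
have [[psi phiK psiK] arc_phi] := iso_phi.
apply/idP/idP; last by apply: walkb_hom => a b /arc_phi.
rewrite -{2}(phiK x) -{2}(phiK y); apply: walkb_hom => a b arc_ab.
by apply/arc_phi; rewrite !psiK.
Qed.

Lemma distb_iso x y k : distb H (phi x) (phi y) k = distb G x y k.
Proof. by rewrite /distb walkb_iso; congr andb; apply: eq_forallb => m; rewrite walkb_iso. Qed.

Lemma dcount_iso x k : dcount H (phi x) k = dcount G x k.
Proof.
have [[psi phiK _] _] := iso_phi.
rewrite /dcount -(card_preimset _ (can_inj phiK)).
by apply: eq_card => j; rewrite !inE distb_iso.
Qed.

End Isomorphism.

Lemma not_rigid_twins n (G : graph n) :
  ~ geom_rigid G -> exists i j : 'I_n, i <> j /\ dcount G i =1 dcount G j.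
Proof.
case: (boolP [exists i, exists j, (i != j) && [forall k, dcmx G i k == dcmx G j k]]).
- case/existsP=> i /existsP[j /andP[/eqP ne_ij /forallP same_row]] _.
  exists i, j; split=> // k; have [lt_k_n | le_n_k] := ltnP k n.
    exact/eqP/(same_row (Ordinal lt_k_n)).
  by rewrite !dcount_ge.
- move/existsPn=> no_twins [] i j /eqP ne_ij.
  move/existsPn/(_ j): (no_twins i); rewrite ne_ij /= => /forallPn[k /eqP diff_k].
  by exists k.
Qed.

(* Only the nonzero entries are listed, so the code does not depend on the
   cutoff [N] once [c] vanishes beyond it. *)
Definition support_code (c : nat -> nat) (N : nat) : nat :=
  pickle [seq (k, c k) | k <- iota 0 N & c k != 0].

Lemma support_code_eq c1 c2 N : c1 =1 c2 -> support_code c1 N = support_code c2 N.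
Proof.
move=> eq_c; rewrite /support_code (@eq_filter _ _ (fun k => c2 k != 0)) => [|k].
  by congr pickle; apply: eq_map => k; rewrite eq_c.
by rewrite /= eq_c.
Qed.

Lemma support_code_pad c N M :
  N <= M -> (forall k, N <= k -> c k = 0) -> support_code c M = support_code c N.
Proof.
move=> le_N_M c_vanish; rewrite /support_code -(subnKC le_N_M) iotaD filter_cat add0n.
rewrite (@eq_in_filter _ _ pred0 (iota N (M - N))) ?filter_pred0 ?cats0 // => k.
by rewrite mem_iota => /andP[le_N_k _] /=; rewrite c_vanish.
Qed.

Lemma support_code_inj c1 c2 N :
  support_code c1 N = support_code c2 N -> forall k, k < N -> c1 k = c2 k.
Proof.
move/(pcan_inj pickleK) => same_supp k lt_k_N.
have in_supp c : c k != 0 -> (k, c k) \in [seq (k, c k) | k <- iota 0 N & c k != 0].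
  by move=> nz; apply: map_f; rewrite mem_filter nz mem_iota.
have supp_val c m : (k, m) \in [seq (k, c k) | k <- iota 0 N & c k != 0] -> c k = m.
  by case/mapP=> k' _ [-> ->].
have [c1k0 | /in_supp] := eqVneq (c1 k) 0; last by rewrite same_supp => /supp_val.
have [c2k0 | /in_supp] := eqVneq (c2 k) 0; first by rewrite c1k0 c2k0.
by rewrite -same_supp => /supp_val.
Qed.

Definition dcount_code : centrality_fun :=
  fun n G i => INR (support_code (dcount G i) n).

Lemma dcount_code_centrality : is_centrality dcount_code.
Proof.
move=> n G H phi iso_phi x; rewrite /dcount_code; congr INR.
by apply: support_code_eq => k; rewrite (dcount_iso iso_phi).
Qed.

Lemma dcount_code_strictly_geometric : strictly_geometric dcount_code.
Proof.
move=> n n' G G' i i' same_row; rewrite /dcount_code (support_code_eq n same_row).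
congr INR; rewrite -(@support_code_pad _ n (maxn n n')) ?leq_maxl //; last first.
  by move=> k le_n_k; rewrite -same_row dcount_ge.
by rewrite (@support_code_pad _ n' (maxn n n')) ?leq_maxr // => k; apply: dcount_ge.
Qed.

Lemma dcount_code_no_ties n (G : graph n) : geom_rigid G -> no_ties dcount_code G.
Proof.
move=> rigid x y ne_xy /INR_eq same_code; have [k] := rigid x y ne_xy; apply.
exact: support_code_inj same_code _ (ltn_ord k).
Qed.

Lemma strictly_geometricW f : is_centrality f -> strictly_geometric f -> geometric f.
Proof. by move=> cent_f geom_f; exists f. Qed.

Lemma respectsE (f : centrality_fun) n (G : graph n) pi :
  respects f G pi <-> respecting (f n G) pi.
Proof. by split=> resp i j ji; apply/RleP; apply: resp. Qed.

Lemma no_ties_inj (f : centrality_fun) n (G : graph n) :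
  no_ties f G -> injective (f n G).
Proof.
move=> f_inj x y fxy; have [// | /eqP ne_xy] := eqVneq x y.
by case: (f_inj x y ne_xy fxy).
Qed.

Lemma geometric_ties f n (G : graph n) : geometric f -> ~ geom_rigid G -> ~ no_ties f G.
Proof.
case=> g [_ [geom_g equiv_fg]] /not_rigid_twins[i [j [ne_ij same_row]]].
move=> /no_ties_inj f_inj.
have g_tperm x : g n G (tperm i j x) = g n G x.
  by case: tpermP => // ->; rewrite (geom_g _ _ G G i j same_row).
have [pi resp_pi] := exists_respecting (f n G).
have resp_swap : respecting (f n G) (pi * tperm i j)%g.
  apply/respectsE/equiv_fg/respectsE/respecting_mulr => //.
  by apply/respectsE/equiv_fg/respectsE.
have /permP/(_ ((pi^-1)%g i)) := respecting_uniq f_inj resp_swap resp_pi.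
by rewrite permM permKV tpermL => /esym.
Qed.

Theorem theorem2 :
  (forall f : centrality_fun, is_centrality f -> geometric f ->
     forall n (G : graph n), ~ geom_rigid G -> ~ no_ties f G) /\
  (exists f : centrality_fun, is_centrality f /\ geometric f /\
     forall n (G : graph n), geom_rigid G -> no_ties f G).
Proof.
split=> [f _ geom_f n G | ]; first exact: geometric_ties.
exists dcount_code; split; first exact: dcount_code_centrality.
split; last exact: dcount_code_no_ties.
exact: strictly_geometricW dcount_code_centrality dcount_code_strictly_geometric.
Qed.
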